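(* Let $k>1/2$ be real, and let $d$ be a positive odd integer. With the notation of the context, for each $1\le j\le R$, \[ \mathcal{N}_j(d,2k-1)^{\frac{2k}{2k-1}} \le \mathcal{N}_j(d,2k)\,\frac{(1+e^{-\ell_j})^{\frac{2k}{2k-1}}}{(1-e^{-\ell_j})^2} + \mathcal{Q}_j(d), \] where $\mathcal{Q}_j(d)=\Big(\frac{124k^2\,\mathcal{P}_j(d)}{\ell_j}\Big)^{2r_k\ell_j}$ with $r_k=1+\lceil \frac{k}{2k-1}\rceil$.
   Context: $f$ is a fixed holomorphic Hecke eigenform of weight $\kappa$ for $SL_2(\mathbb{Z})$ with Fourier expansion $f(z)=\sum_{n\ge1}\lambda_f(n)n^{(\kappa-1)/2}e(nz)$, where $\lambda_f(n)$ are real, $\lambda_f(1)=1$, $|\lambda_f(n)|\le d(n)$. $\chi_{8d}=\left(\frac{8d}{\cdot}\right)$ is the Kronecker symbol. $X$ is large; $N,M$ are large natural numbers depending only on $k$. Define even natural numbers $\ell_1=2\lceil N\log\log X\rceil$ and $\ell_{j+1}=2\lceil N\log \ell_j\rceil$, and let $R$ be the largest natural number with $\ell_R>10^M$; $M$ is taken large enough that $\ell_j>\ell_{j+1}^2$ for $1\le j\le R-1$. Let $P_1$ be the set of odd primes $\le X^{1/\ell_1^2}$ and, for $2\le j\le R$, $P_j$ the set of primes in $(X^{1/\ell_{j-1}^2},X^{1/\ell_j^2}]$. Set $\mathcal{P}_j(d)=\sum_{p\in P_j}\lambda_f(p)\chi_{8d}(p)/\sqrt p$ (a real number). For an integer $\ell\ge0$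 and real $x$, $E_\ell(x)=\sum_{i=0}^{\ell}x^i/i!$, and for real $\alpha$, $\mathcal{N}_j(d,\alpha)=E_{\ell_j}(\alpha\mathcal{P}_j(d))$, which is positive since $\ell_j$ is even. *)

From HB Require Import structures.
From mathcomp Require Import all_boot all_order all_algebra.
From mathcomp Require Import all_classical all_reals all_analysis.
Set Implicit Arguments. Unset Strict Implicit. Unset Printing Implicit Defensive.
Import Order.TTheory GRing.Theory Num.Theory.
Local Open Scope ring_scope.

(* ceiling of a real, as a natural number (used only on positive arguments) *)
Definition nceil {R : realType} (x : R) : nat := `|Num.ceil x|%N.

(* Kronecker symbol chi_{8d}(p) = (8d / p) evaluated at a prime p.
   For p = 2 it is 0 (8d even); for odd primes p it is the Legendre symbol. *)
Definition chi8d (d p : nat) : int :=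
  if p == 2%N then 0
  else if (p %| 8 * d)%N then 0
  else if [exists x : 'I_p, ((x * x) %% p == (8 * d) %% p)%N] then 1 else -1.

Definition E_trunc {R : realType} (l : nat) (x : R) : R :=
  \sum_(i < l.+1) x ^+ i / (i`!)%:R.

(* ell_aux n = ell_{n+1}:  ell_1 = 2 ceil(N log log X), ell_{j+1} = 2 ceil(N log ell_j) *)
Fixpoint ell_aux {R : realType} (N : nat) (X : R) (n : nat) : nat :=
  match n with
  | 0 => (2 * nceil (N%:R * ln (ln X)))%N
  | n'.+1 => (2 * nceil (N%:R * ln ((ell_aux N X n')%:R : R)))%N
  end.

Definition ell {R : realType} (N : nat) (X : R) (j : nat) : nat := ell_aux N X j.-1.

Definition Pupper {R : realType} (N : nat) (X : R) (j : nat) : R :=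
  X `^ (((ell N X j) ^ 2)%:R)^-1.

Definition inP {R : realType} (N : nat) (X : R) (j p : nat) : bool :=
  prime p && (p%:R <= Pupper N X j) &&
  (if j == 1%N then p != 2%N else Pupper N X j.-1 < p%:R).

Definition Psum {R : realType} (lam : nat -> R) (N : nat) (X : R) (d j : nat) : R :=
  \sum_(p < (Num.truncn (Pupper N X j)).+1 | inP N X j p)
     lam p * (chi8d d p)%:~R / Num.sqrt (p%:R).

Definition Nj {R : realType} (lam : nat -> R) (N : nat) (X : R) (d j : nat) (a : R) : R :=
  E_trunc (ell N X j) (a * Psum lam N X d j).

Definition r_k {R : realType} (k : R) : nat := (1 + nceil (k / (2 * k - 1)))%N.

Definition Qj {R : realType} (lam : nat -> R) (N : nat) (X : R) (d j : nat) (k : R) : R :=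
  (124 * k ^+ 2 * Psum lam N X d j / (ell N X j)%:R) ^+ (2 * r_k k * ell N X j).

(* Put l = ell_j, p = 2k/(2k-1), x = P_j(d) and t = (2k-1) x, so that 2k x = p t.
   If z := 124 k^2 |x| / l is at most 3, then t and p t are small compared with l
   and E_l approximates exp within relative error e^-l at both points, whence
     E_l(t)^p <= ((1 + e^-l) e^t)^p = (1 + e^-l)^p e^(pt)
              <= (1 + e^-l)^p E_l(pt) / (1 - e^-l).
   If z > 3, the crude bound |E_l(s)| <= (e (1 + |s|/l))^l gives E_l(t)^p <= z^(pl)
   and |E_l(pt)| <= (z^2/2)^l, and both are absorbed by Q_j = z^(2 r_k l) because
   p + 2 <= 2 r_k. *)

From HB Require Import structures.
From mathcomp Require Import all_boot all_order all_algebra.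
From mathcomp Require Import all_classical all_reals all_analysis.
Import Order.TTheory GRing.Theory Num.Theory.
From mathcomp Require Import ring lra.
Local Open Scope ring_scope.

Section TruncatedExponential.
Variable R : realType.
Implicit Types (x t : R) (l : nat).

Lemma expR1_le : expR (1 : R) <= 29 / 10.
Proof.
have e10 : expR (1 : R) = expR (1 / 10) ^+ 10.
  by rewrite -expRM_natr; congr expR; rewrite mul1r mulVf.
have inv_le : 9 / 10 <= expR (- (1 / 10) : R).
  by apply: le_trans (expR_ge1Dx _); lra.
have tenth_le : expR (1 / 10 : R) <= 10 / 9.
  rewrite -[expR (1 / 10)]invrK -expRN -[10 / 9 : R]invf_div.
  by rewrite lef_pV2 ?posrE ?expR_gt0 //; lra.
rewrite e10; apply: le_trans (_ : (10 / 9 : R) ^+ 10 <= _).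
  by rewrite lerXn2r ?nnegrE ?expR_ge0 //; lra.
rewrite !exprS expr0; lra.
Qed.

Lemma expR1_ge2 : 2 <= expR (1 : R).
Proof. by apply: le_trans (expR_ge1Dx _); lra. Qed.

Lemma exprn_div_fact_le_expR x n : 0 <= x -> x ^+ n / n`!%:R <= expR x.
Proof.
move=> x0; case: n => [|n].
  by rewrite expr0 fact0 divr1; apply: le_trans (expR_ge1Dx _); lra.
by apply: le_trans (expR_ge1Dxn n x0); lra.
Qed.

Lemma exp_coeff_norm_le l i t : (0 < l)%N -> (l <= i)%N ->
  `|t| ^+ i / i`!%:R <= (expR 1 * `|t| / l%:R) ^+ i.
Proof.
move=> l0 li; have i0 : (0 < i)%N by apply: leq_trans li.
have iR : (i%:R : R) != 0 by rewrite pnatr_eq0 -lt0n.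
have stirling : (i%:R : R) ^+ i / i`!%:R <= expR 1 ^+ i.
  by rewrite -expRM_natr mul1r; apply: exprn_div_fact_le_expR.
have -> : `|t| ^+ i / i`!%:R = (`|t| / i%:R) ^+ i * ((i%:R : R) ^+ i / i`!%:R).
  by rewrite expr_div_n mulrA divfK // expf_neq0.
rewrite -(mulrA (expR 1)) [X in _ <= X]exprMn [X in _ <= X]mulrC.
apply: ler_pM => //; rewrite ?exprn_ge0 ?divr_ge0 //.
rewrite lerXn2r ?nnegrE ?divr_ge0 //.
by rewrite ler_pdivrMr ?ltr0n // mulrAC ler_pdivlMr ?ltr0n // ler_wpM2l // ler_nat.
Qed.

Lemma sum_exprn_le_half (q : R) m n : 0 <= q -> q <= 1 / 2 ->
  \sum_(m <= i < m + n) q ^+ i <= 2 * q ^+ m.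
Proof.
move=> q0 q2; elim: n => [|n IH].
  by rewrite addn0 big_geq // mulr_ge0 // exprn_ge0.
rewrite addnS big_nat_recl ?leq_addr //.
have -> : \sum_(m <= i < m + n) q ^+ i.+1 = q * \sum_(m <= i < m + n) q ^+ i.
  by rewrite mulr_sumr; apply: eq_bigr => i _; rewrite exprS.
have qm0 := exprn_ge0 m q0.
have : q * \sum_(m <= i < m + n) q ^+ i <= q * (2 * q ^+ m) by rewrite ler_wpM2l.
nra.
Qed.

Lemma exp_series_sub_E_trunc_le l n t : (0 < l)%N -> (l < n)%N ->
  expR 1 * `|t| / l%:R <= 1 / 2 ->
  `|series (exp_coeff t) n - E_trunc l t| <= 2 * (expR 1 * `|t| / l%:R) ^+ l.+1.
Proof.
move=> l0 ln q2; set q := expR 1 * `|t| / l%:R.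
have q0 : 0 <= q by rewrite /q divr_ge0 // mulr_ge0 // expR_ge0.
rewrite /series /= (@big_cat_nat _ _ _ l.+1) //= /E_trunc big_mkord addrC addrK.
apply: le_trans (ler_norm_sum _ _ _) _.
apply: le_trans (_ : \sum_(l.+1 <= i < n) q ^+ i <= _); last first.
  by rewrite -(subnKC ln) sum_exprn_le_half.
rewrite big_nat_cond [X in _ <= X]big_nat_cond.
apply: ler_sum => i /andP [/andP [li _] _].
rewrite /exp_coeff /= normrM normfV normrX [`|_%:R|]ger0_norm //.
by apply: exp_coeff_norm_le => //; apply: ltnW.
Qed.

Lemma expR_sub_E_trunc_le l t : (0 < l)%N ->
  expR 1 * `|t| / l%:R <= 1 / 2 ->
  `|expR t - E_trunc l t| <= 2 * (expR 1 * `|t| / l%:R) ^+ l.+1.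
Proof.
move=> l0 q2; set T := 2 * _.
have cv := is_cvg_series_exp_coeff t.
have tail n : (l < n)%N -> `|series (exp_coeff t) n - E_trunc l t| <= T.
  by move=> ln; apply: exp_series_sub_E_trunc_le.
rewrite ler_norml; apply/andP; split.
- suff : E_trunc l t - T <= expR t by lra.
  apply: limr_ge => //; near=> n.
  have ln : (l < n)%N by near: n; exists l.+1.
  by have := tail n ln; rewrite ler_norml => /andP [lo _]; lra.
- suff : expR t <= E_trunc l t + T by lra.
  apply: limr_le => //; near=> n.
  have ln : (l < n)%N by near: n; exists l.+1.
  by have := tail n ln; rewrite ler_norml => /andP [_ hi]; lra.
Unshelve. all: by end_near.
Qed.

Lemma expRN_natr_le_half l : (0 < l)%N -> expR (- l%:R) <= 1 / 2 :> R.
Proof.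
move=> l0; apply: le_trans (_ : expR (-1) <= _).
  by rewrite ler_expR lerN2 ler1n.
rewrite expRN -[1 / 2 : R]invf_div lef_pV2 ?posrE ?expR_gt0 //.
by have := expR1_ge2; lra.
Qed.

Lemma expR1_mul_le_expRN (s : R) : 0 <= s -> s <= 3 / 31 ->
  expR 1 * s <= expR (- (1 + s)).
Proof.
move=> s0 s3; have e1 := expR1_le; have e0 : 0 <= expR (1 : R) := expR_ge0 _.
have es : expR s <= 31 / 28.
  have : 28 / 31 <= expR (- s) by apply: le_trans (expR_ge1Dx _); lra.
  rewrite -[expR s]invrK -expRN -[31 / 28 : R]invf_div.
  by rewrite lef_pV2 ?posrE ?expR_gt0 //; lra.
rewrite expRN expRD -div1r ler_pdivlMr ?mulr_gt0 ?expR_gt0 //.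
have ee : expR 1 * expR 1 <= 29 / 10 * (29 / 10 : R) by apply: ler_pM.
have ses : s * expR s <= 3 / 31 * (31 / 28 : R) by apply: ler_pM; rewrite ?expR_ge0.
have -> : expR 1 * s * (expR 1 * expR s) = (expR 1 * expR 1) * (s * expR s) by ring.
apply: le_trans (_ : (29 / 10 * (29 / 10)) * (3 / 31 * (31 / 28)) <= _); last lra.
by apply: ler_pM; rewrite ?mulr_ge0 ?expR_ge0.
Qed.

Lemma E_trunc_rel_err l t : (0 < l)%N -> 31 * `|t| <= 3 * l%:R ->
  `|expR t - E_trunc l t| <= expR (- l%:R) * expR t.
Proof.
move=> l0 small; have lR : (0 : R) < l%:R by rewrite ltr0n.
(* With s = |t|/l and q = e s, the tail 2 q^(l+1) is at most q^l <= e^(-(1+s) l),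
   which is e^-l e^-|t|. *)
set s := `|t| / l%:R.
have s0 : 0 <= s by rewrite /s divr_ge0.
have s3 : s <= 3 / 31 by rewrite /s ler_pdivrMr //; lra.
have qs : expR 1 * `|t| / l%:R = expR 1 * s by rewrite /s mulrA.
set q := expR 1 * s in qs.
have q0 : 0 <= q by rewrite mulr_ge0 // expR_ge0.
have q_le := expR1_mul_le_expRN s s0 s3; rewrite -/q in q_le.
have q2 : q <= 1 / 2.
  apply: (le_trans q_le); rewrite (le_trans _ (expRN_natr_le_half 1 isT)) //.
  by rewrite ler_expR; lra.
have err := expR_sub_E_trunc_le l t l0; rewrite qs in err.
apply: le_trans (err q2) _.
have ql : 2 * q ^+ l.+1 <= q ^+ l by rewrite exprS mulrA ler_piMl ?exprn_ge0 //; lra.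
apply: le_trans ql _; apply: le_trans (_ : expR (- (1 + s)) ^+ l <= _).
  by rewrite lerXn2r // nnegrE expR_ge0.
rewrite -expRM_natr -expRD ler_expR mulNr mulrDl mul1r /s divfK ?gt_eqF //.
by have := ler_norm (- t); rewrite normrN; lra.
Qed.

Lemma sum_exprn_le_1Dn (u : R) n : 0 <= u -> \sum_(i < n.+1) u ^+ i <= (1 + u) ^+ n.
Proof.
move=> u0; rewrite addrC exprD1n; apply: ler_sum => i _.
rewrite -[X in X <= _]mulr1n ler_wpMn2l ?exprn_ge0 // bin_gt0 -ltnS.
exact: ltn_ord.
Qed.

Lemma E_trunc_norm_le l t : (0 < l)%N ->
  `|E_trunc l t| <= (expR 1 * (1 + `|t| / l%:R)) ^+ l.
Proof.
move=> l0; have lR : (0 : R) < l%:R by rewrite ltr0n.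
set u := `|t| / l%:R; have u0 : 0 <= u by rewrite /u divr_ge0.
rewrite /E_trunc; apply: le_trans (ler_norm_sum _ _ _) _.
apply: le_trans (_ : \sum_(i < l.+1) expR 1 ^+ l * u ^+ i <= _); last first.
  by rewrite -mulr_sumr exprMn ler_wpM2l ?exprn_ge0 ?expR_ge0 ?sum_exprn_le_1Dn.
apply: ler_sum => i _.
rewrite normrM normfV normrX [`|_%:R|]ger0_norm // -/u.
have -> : `|t| = u * l%:R by rewrite /u divfK // gt_eqF.
rewrite exprMn -mulrA mulrC ler_wpM2r ?exprn_ge0 // -expRM_natr mul1r.
by apply: exprn_div_fact_le_expR; apply: ltW.
Qed.

Lemma powR_le_of_expR_rel_approx (f : R -> R) (d p t : R) :
  0 <= d < 1 -> 0 <= p ->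
  `|expR t - f t| <= d * expR t -> `|expR (p * t) - f (p * t)| <= d * expR (p * t) ->
  f t `^ p <= f (p * t) * ((1 + d) `^ p / (1 - d) ^+ 2).
Proof.
move=> /andP [d0 d1] p0.
rewrite !ler_norml => /andP [ft_le ft_ge] /andP [_ fpt_ge].
have et := expR_gt0 t; have ept := expR_gt0 (p * t).
have ft_ge0 : 0 <= f t by nra.
have {}fpt_ge : (1 - d) * expR (p * t) <= f (p * t) by lra.
apply: le_trans (_ : (1 + d) `^ p * expR (p * t) <= _).
  apply: le_trans (_ : ((1 + d) * expR t) `^ p <= _).
    by apply: ge0_ler_powR; rewrite ?nnegrE //; nra.
  have d1_ge0 : 0 <= 1 + d by lra.
  by rewrite powRM ?expR_ge0 // -expRM (mulrC t).
have D0 : 0 < 1 - d by lra.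
have ept_le : expR (p * t) <= f (p * t) / (1 - d) ^+ 2.
  rewrite ler_pdivlMr ?exprn_gt0 // expr2 mulrA.
  have e1d : 0 <= expR (p * t) * (1 - d) by rewrite mulr_ge0 // ltW.
  by apply: (le_trans _ fpt_ge); nra.
by rewrite mulrCA ler_wpM2l ?powR_ge0 // mulrC.
Qed.

(* [a `^ p] is [1] for negative [a], hence the hypothesis [1 <= c]. *)
Lemma powR_le_of_norm_le (a c p : R) : 0 <= p -> 1 <= c -> `|a| <= c ->
  a `^ p <= c `^ p.
Proof.
move=> p0 c1 ac; have [a_lt0 | a_ge0] := ltP a 0.
  rewrite -[a `^ p](ger0_norm (powR_ge0 _ _)) lt0_norm_powR //.
  by rewrite -[X in X <= _](powRr0 c) ler_powR.
have c0 : 0 <= c by lra.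
by apply: ge0_ler_powR; rewrite ?nnegrE // (le_trans (ler_norm a) ac).
Qed.

Lemma correction_factor_le (d p : R) np : 0 <= d <= 1 / 2 -> 0 <= p -> p <= np%:R ->
  (1 + d) `^ p / (1 - d) ^+ 2 <= 4 * 2 ^+ np.
Proof.
move=> /andP [d0 d2] p0 pn.
have num : (1 + d) `^ p <= 2 ^+ np.
  apply: le_trans (_ : 2 `^ p <= _).
    by apply: ge0_ler_powR; rewrite ?nnegrE //; lra.
  by rewrite -powR_mulrn // ler_powR //; lra.
have den : 1 / 4 <= (1 - d) ^+ 2 by rewrite expr2; nra.
have A0 : 0 < (1 - d) ^+ 2 by rewrite exprn_gt0 //; lra.
rewrite ler_pdivrMr //.
move: num den (exprn_ge0 np (ler0n R 2)).
set P := _ `^ p; set A := (1 - d) ^+ 2; set B := 2 ^+ np; nra.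
Qed.

Lemma powR_E_trunc_le_exprn l (p t z : R) : (0 < l)%N -> 0 <= p -> 3 <= z ->
  `|t| / l%:R <= z / 124 -> E_trunc l t `^ p <= (z `^ p) ^+ l.
Proof.
move=> l0 p0 z3 tz; have z0 : 0 <= z by lra.
have e_le := expR1_le; have e_ge0 : 0 <= expR (1 : R) := expR_ge0 _.
have lR : (0 : R) < l%:R by rewrite ltr0n.
have Et_le : `|E_trunc l t| <= z ^+ l.
  apply: le_trans (E_trunc_norm_le l t l0) _.
  rewrite lerXn2r ?nnegrE ?mulr_ge0 ?addr_ge0 ?divr_ge0 //; try lra.
  apply: le_trans (_ : 29 / 10 * (1 + z / 124) <= _); last lra.
  by apply: ler_pM => //; rewrite ?addr_ge0 ?divr_ge0 //; lra.
have zl1 : 1 <= z ^+ l by rewrite exprn_ege1 //; lra.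
apply: le_trans (powR_le_of_norm_le _ _ _ p0 zl1 Et_le) _.
by rewrite -powR_mulrn // powRAC powR_mulrn ?powR_ge0.
Qed.

Lemma E_trunc_mul_correction_ge l np (p s z : R) :
  0 <= p -> p <= np%:R -> (np + 4 <= l)%N -> 3 <= z -> `|s| / l%:R <= z / 31 ->
  - ((z ^+ 2) ^+ l / 4) <=
  E_trunc l s * ((1 + expR (- l%:R)) `^ p / (1 - expR (- l%:R)) ^+ 2).
Proof.
move=> p0 pn hl z3 sz.
have l0 : (0 < l)%N by apply: leq_trans hl; rewrite addn4.
have e_le := expR1_le; have e_ge0 : 0 <= expR (1 : R) := expR_ge0 _.
have lR : (0 : R) < l%:R by rewrite ltr0n.
have zz : 3 * z <= z ^+ 2 by rewrite expr2 ler_wpM2r //; lra.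
have Es_le : `|E_trunc l s| <= (z ^+ 2) ^+ l / 2 ^+ l.
  rewrite -expr_div_n; apply: le_trans (E_trunc_norm_le l s l0) _.
  rewrite lerXn2r ?nnegrE ?mulr_ge0 ?addr_ge0 ?divr_ge0 ?sqr_ge0 //; try lra.
  apply: le_trans (_ : 29 / 10 * (1 + z / 31) <= _); last lra.
  by apply: ler_pM => //; rewrite ?addr_ge0 ?divr_ge0 //; lra.
have d_le := expRN_natr_le_half l l0.
set C := (1 + _) `^ p / _.
have C_le : C <= 4 * 2 ^+ np by apply: correction_factor_le; rewrite ?expR_ge0.
have C0 : 0 <= C by rewrite divr_ge0 ?powR_ge0 ?exprn_ge0 //; lra.
have two_l : 16 * 2 ^+ np <= (2 : R) ^+ l.
  apply: le_trans (_ : (2 : R) ^+ (np + 4) <= _); last by rewrite ler_eXn2l //; lra.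
  by rewrite exprD mulrC !exprS expr0; lra.
have CE_le : C * `|E_trunc l s| <= (z ^+ 2) ^+ l / 4.
  apply: le_trans (_ : (4 * 2 ^+ np) * ((z ^+ 2) ^+ l / 2 ^+ l) <= _).
    by apply: ler_pM.
  rewrite mulrA ler_pdivrMr ?exprn_gt0 //.
  move: (exprn_ge0 np (ler0n R 2)) two_l (exprn_ge0 l (sqr_ge0 z)).
  set B := (2 : R) ^+ np; set T := (2 : R) ^+ l; nra.
apply: le_trans (_ : - (C * `|E_trunc l s|) <= _); first by rewrite lerN2.
by rewrite mulrC -mulNr ler_wpM2r // lerNl -normrN ler_norm.
Qed.

Lemma powR_E_trunc_le_large l np (p t z : R) :
  0 <= p -> p <= np%:R -> (np + 4 <= l)%N -> 3 <= z ->
  `|t| / l%:R <= z / 124 -> `|p * t| / l%:R <= z / 31 ->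
  E_trunc l t `^ p <=
  E_trunc l (p * t) * ((1 + expR (- l%:R)) `^ p / (1 - expR (- l%:R)) ^+ 2)
  + (z `^ p * z ^+ 2) ^+ l.
Proof.
move=> p0 pn hl z3 tz ptz.
have l0 : (0 < l)%N by apply: leq_trans hl; rewrite addn4.
have lhs := powR_E_trunc_le_exprn l p t z l0 p0 z3 tz.
have rhs := E_trunc_mul_correction_ge l np p (p * t) z p0 pn hl z3 ptz.
have Z1 : 1 <= (z `^ p) ^+ l by rewrite exprn_ege1 // -(powRr0 z) ler_powR //; lra.
have W4 : 4 <= (z ^+ 2) ^+ l.
  by apply: le_trans (_ : z ^+ 2 <= _); rewrite ?ler_eXnr //; nra.
rewrite exprMn; move: lhs rhs Z1 W4.
set Z := (z `^ p) ^+ l; set W := (z ^+ 2) ^+ l; set E := _ * (_ / _); nra.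
Qed.

Lemma nceil_ge (y : R) : 0 <= y -> y <= (nceil y)%:R.
Proof.
move=> y0; rewrite /nceil natr_absz ger0_norm; first exact: ceil_ge.
by rewrite ceil_ge0; lra.
Qed.

Lemma E_trunc_powR_le_small l (p t : R) : (0 < l)%N -> 1 <= p ->
  31 * `|p * t| <= 3 * l%:R ->
  E_trunc l t `^ p <=
  E_trunc l (p * t) * ((1 + expR (- l%:R)) `^ p / (1 - expR (- l%:R)) ^+ 2).
Proof.
move=> l0 p1 pt_small; have p0 : 0 <= p by lra.
have t_small : 31 * `|t| <= 3 * l%:R.
  by move: pt_small; rewrite normrM (ger0_norm p0); have := normr_ge0 t; nra.
have d_lt1 : 0 <= expR (- l%:R : R) < 1.
  by rewrite expR_ge0 (le_lt_trans (expRN_natr_le_half l l0)) //; lra.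
by apply: powR_le_of_expR_rel_approx; rewrite ?E_trunc_rel_err.
Qed.

Lemma powR_mul_sqr_le (z p : R) n : 1 <= z -> p + 2 <= n%:R ->
  z `^ p * z ^+ 2 <= z ^+ n.
Proof.
move=> z1 pn; have z0 : 0 <= z by lra.
rewrite -(@powR_mulrn _ z 2) // -powRD; last by apply/implyP => _; rewrite gt_eqF //; lra.
by rewrite -powR_mulrn // ler_powR.
Qed.

Lemma E_trunc_powR_le (k x : R) l : 2^-1 < k ->
  (nceil (2 * k / (2 * k - 1)) + 4 <= l)%N ->
  E_trunc l ((2 * k - 1) * x) `^ (2 * k / (2 * k - 1))
  <= E_trunc l (2 * k * x) * ((1 + expR (- l%:R)) `^ (2 * k / (2 * k - 1))
       / (1 - expR (- l%:R)) ^+ 2)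
     + (124 * k ^+ 2 * x / l%:R) ^+ (2 * r_k k * l).
Proof.
move=> hk hl; have l0 : (0 < l)%N by apply: leq_trans hl; rewrite addn4.
have lR : (0 : R) < l%:R by rewrite ltr0n.
have a0 : 0 < 2 * k - 1 by lra.
set p := 2 * k / (2 * k - 1); set t := (2 * k - 1) * x.
have p1 : 1 <= p by rewrite /p ler_pdivlMr //; lra.
have -> : 2 * k * x = p * t by rewrite /p /t mulrA divfK ?gt_eqF.
set u := `|x| / l%:R; have u0 : 0 <= u by rewrite divr_ge0.
set z := 124 * k ^+ 2 * u; have k2 : 2 * k <= 4 * k ^+ 2 by rewrite expr2; nra.
have -> : (124 * k ^+ 2 * x / l%:R) ^+ (2 * r_k k * l) = z ^+ (2 * r_k k * l).
  have c0 : 0 <= 124 * k ^+ 2 by rewrite mulr_ge0 ?sqr_ge0.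
  rewrite -mulnA !exprM -real_normK ?num_real // -!exprM mulnA; congr (_ ^+ _).
  by rewrite /z /u normrM normfV (gtr0_norm lR) normrM (ger0_norm c0) !mulrA.
have tu : `|t| / l%:R = (2 * k - 1) * u by rewrite /u normrM gtr0_norm // mulrA.
have ptu : `|p * t| / l%:R = 2 * k * u.
  by rewrite /u /t mulrA /p divfK ?gt_eqF // normrM gtr0_norm ?mulrA //; lra.
have [z3 | z3] := leP z 3.
- apply: ler_wpDr; first by rewrite exprn_ge0 // /z !mulr_ge0 ?sqr_ge0 //; lra.
  apply: E_trunc_powR_le_small => //.
  rewrite -[`|p * t|](divfK (lt0r_neq0 lR)) ptu.
  have : 31 * (2 * k * u) <= 3 by move: z3; rewrite /z; nra.
  nra.
- have p0 : 0 <= p by lra.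
  have tz : `|t| / l%:R <= z / 124.
    by rewrite tu /z; have := sqr_ge0 (k - 1); rewrite !expr2; nra.
  have ptz : `|p * t| / l%:R <= z / 31 by rewrite ptu /z; nra.
  apply: le_trans (powR_E_trunc_le_large l (nceil p) p t z p0 (nceil_ge p p0) hl
    (ltW z3) tz ptz) _.
  rewrite lerD2l exprM; apply: lerXn2r.
  - by rewrite nnegrE mulr_ge0 ?powR_ge0 ?exprn_ge0 //; lra.
  - by rewrite nnegrE exprn_ge0 //; lra.
  apply: powR_mul_sqr_le; first lra.
  have p_half : p = 2 * (k / (2 * k - 1)) by rewrite /p mulrA.
  rewrite /r_k natrM natrD p_half.
  by have := nceil_ge (k / (2 * k - 1)) (divr_ge0 _ _); lra.
Qed.

End TruncatedExponential.

Lemma leq_last_of_nonincreasing (f : nat -> nat) m n :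
  (forall i, (m <= i)%N -> (i < n)%N -> (f i.+1 <= f i)%N) ->
  forall i, (m <= i <= n)%N -> (f n <= f i)%N.
Proof.
move=> step i im; have nm : (m <= n)%N by case/andP: im; apply: leq_trans.
apply: (@homo_leq_in nat [pred i | m <= i <= n]%N f (fun a b => b <= a)%N) => //=.
- by move=> b a c ba cb; apply: leq_trans ba.
- move=> a b /andP [ma _] /andP [_ bn] c /andP [ac cb].
  by rewrite inE /= (leq_trans ma (ltnW ac)) (leq_trans (ltnW cb) bn).
- by move=> a /andP [ma _] /andP [_ an]; apply: step.
- by rewrite inE leqnn nm.
- by case/andP: im.
Qed.

Theorem lemma3p4 (R : realType) (k : R) (hk : 2^-1 < k) :
  exists N0 M0 : nat, forall N M : nat, (N0 <= N)%N -> (M0 <= M)%N ->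
  exists X0 : R, forall X : R, X0 <= X ->
  forall Rr : nat,
    (10 ^ M < ell N X Rr)%N ->
    (forall n, (Rr < n)%N -> (ell N X n <= 10 ^ M)%N) ->
    (forall j, (1 <= j)%N -> (j < Rr)%N -> (ell N X j.+1 ^ 2 < ell N X j)%N) ->
  forall lam : nat -> R,
    lam 1%N = 1 ->
    (forall n, `|lam n| <= (size (divisors n))%:R) ->
  forall d : nat, (0 < d)%N -> odd d ->
  forall j : nat, (1 <= j)%N -> (j <= Rr)%N ->
    Nj lam N X d j (2 * k - 1) `^ (2 * k / (2 * k - 1))
    <= Nj lam N X d j (2 * k)
       * ((1 + expR (- (ell N X j)%:R)) `^ (2 * k / (2 * k - 1))
          / (1 - expR (- (ell N X j)%:R)) ^+ 2)
     + Qj lam N X d j k.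
Proof.
exists 0%N, (nceil (2 * k / (2 * k - 1)) + 4)%N => N M _ hM.
exists 0 => X _ Rr hR _ chain lam _ _ d _ _ j j1 jR.
have ell_le : (ell N X Rr <= ell N X j)%N.
  apply: (@leq_last_of_nonincreasing (ell N X) 1%N Rr); last by rewrite j1 jR.
  move=> i i1 iR; apply: leq_trans (ltnW (chain i i1 iR)).
  by case: (ell N X i.+1) => // n; rewrite -{1}(expn1 n.+1) leq_pexp2l.
have hl : (nceil (2 * k / (2 * k - 1)) + 4 <= ell N X j)%N.
  apply: leq_trans hM (leq_trans _ ell_le).
  exact: ltnW (leq_ltn_trans (ltnW (ltn_expl M _)) hR).
exact: E_trunc_powR_le.
Qed.
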